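(* Let $\mathcal{B}=(T,\bowtie)$ be a block of homogeneous transactions, let $k$ be the chromatic number of the conflict graph $(T,\bowtie)$, and let $c_{\min}:T\to\{1,\dots,k\}$ be a proper vertex coloring of $(T,\bowtie)$ with $k$ colors. Let $T_i=\{tx\in T: c_{\min}(tx)=i\}$ and $\mathcal S_{c_{\min}}=\mathrm{LevelSchedule}(T_1,\dots,T_k)$. Then $\mathrm{Lt}_{\mathbb 1}(\mathcal S_{c_{\min}})=k$.
   Context: A block consists of a finite set $T$ of transactions with a symmetric irreflexive conflict relation $\bowtie$; the conflict graph is the undirected graph $(T,\bowtie)$. The block is homogeneous, and all transaction lengths are taken to be $1$ (length function $\mathbb 1\equiv 1$). A schedule is a set $\mathcal S\subseteq T\times T$ with $(T,\mathcal S)$ acyclic. The latency $\mathrm{Lt}_{\mathbb 1}(\mathcal S)$ is the maximum number of vertices on a directed path in $(T,\mathcal S)$. $\mathrm{LevelSchedule}(B_1,\dots,B_k)$ for an ordered partition of $T$ into conflict-free sets: set $B_0=\emptyset$, $\mathcal S=\emptyset$; for $i=1,\dots,k$ and, for each $i$, for $j=i-1,\dots,0$ (decreasing): let $E=\{(u,v)\in B_j\times B_i: u\bowtie v\}$, let $P$ be the set of pairs $(x,y)$ with a directed path from $x$ to $y$ in the current $(T,\mathcal S)$, and set $\mathcal S\leftarrow\mathcal S\cup(E\setminus P)$; output $\mathcal S$. *)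

From mathcomp Require Import all_boot.
Set Implicit Arguments. Unset Strict Implicit. Unset Printing Implicit Defensive.

Section Defs.
Variable T : finType.

Definition srel (S : {set T * T}) : rel T := fun a b => (a, b) \in S.

(* a directed path in (T,S), given as its sequence of vertices;
   the empty sequence is the path with 0 vertices *)
Definition dpath (S : {set T * T}) (s : seq T) : bool :=
  if s is x :: s' then path (srel S) x s' else true.

(* Lt_1(S) = n : n is the maximum number of vertices on a directed path *)
Definition latency_is (S : {set T * T}) (n : nat) : Prop :=
  (exists s, dpath S s /\ size s = n) /\ (forall s, dpath S s -> size s <= n).

Definition proper_coloring (e : rel T) (k : nat) (c : T -> 'I_k) : Prop :=
  forall x y, e x y -> c x != c y.

Definition chromatic_number (e : rel T) (k : nat) : Prop :=
  (exists c : T -> 'I_k, proper_coloring e c) /\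
  (forall m, m < k -> ~ exists c : T -> 'I_m, proper_coloring e c).

(* inner step of LevelSchedule for the pair (B_j, B_i):
   S <- S u (E \ P), P computed from the current S *)
Definition level_step (e : rel T) (Bi : {set T}) (S : {set T * T}) (Bj : {set T})
  : {set T * T} :=
  S :|: [set p | [&& p.1 \in Bj, p.2 \in Bi, e p.1 p.2 &
                     ~~ connect (srel S) p.1 p.2]].

(* prev = [B_1; ...; B_{i-1}], rest = [B_i; ...; B_k] *)
Fixpoint level_aux (e : rel T) (S : {set T * T}) (prev rest : seq {set T})
  : {set T * T} :=
  match rest with
  | [::] => S
  | Bi :: rest' =>
      (* j = i-1, ..., 1, 0 (decreasing), with B_0 = set0 *)
      level_aux e (foldl (level_step e Bi) S (rev (set0 :: prev)))
                (rcons prev Bi) rest'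
  end.

Definition LevelSchedule (e : rel T) (B : seq {set T}) : {set T * T} :=
  level_aux e set0 [::] B.

Definition color_classes (k : nat) (c : T -> 'I_k) : seq {set T} :=
  [seq [set x | c x == i] | i <- enum 'I_k].

End Defs.

(* LevelSchedule only adds pairs (x, y) of conflicting transactions with x in an
   earlier colour class than y, and every such pair ends up connected in the
   schedule.  Colours therefore strictly increase along schedule paths, so no
   path has more than k vertices.  Conversely, the number of vertices of a
   longest path starting at a transaction is a proper colouring of the conflict
   graph (as in the Gallai-Roy theorem); if every path had fewer than k
   vertices, this would colour the graph with fewer than k colours. *)
From mathcomp Require Import all_boot.
Set Implicit Arguments. Unset Strict Implicit. Unset Printing Implicit Defensive.

Section LongestPathColoring.
Variables (T : finType) (S : {set T * T}) (m : nat).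
Hypothesis S_bounded : forall s, dpath S s -> size s <= m.

(* The number of edges of a longest path from v; the range 'I_m.+1 always
   contains the trivial path [:: v], even when m = 0. *)
Definition height (v : T) : nat :=
  \max_(n < m.+1 | [exists t : n.-tuple T, path (srel S) v t]) n.

Lemma path_size_bounded v t : path (srel S) v t -> size t < m.
Proof. exact: (S_bounded (s := v :: t)). Qed.

Lemma height_path v : exists2 t, path (srel S) v t & size t = height v.
Proof.
have path0 : [exists t : 0.-tuple T, path (srel S) v t] by apply/existsP; exists [tuple].
rewrite /height (bigmax_eq_arg ord0) //.
by case: arg_maxnP => // n /existsP[t pt] _; exists t; rewrite ?size_tuple.
Qed.

Lemma height_path_ge v t : path (srel S) v t -> size t <= height v.
Proof.
move=> pt; have t_lt : size t < m.+1 := ltnW (path_size_bounded pt).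
by apply: (bigmax_sup (Ordinal t_lt)) => //; apply/existsP; exists (in_tuple t).
Qed.

Lemma height_lt v : height v < m.
Proof. by have [t /path_size_bounded + <-] := height_path v. Qed.

Lemma height_connect u v : u != v -> connect (srel S) u v -> height v < height u.
Proof.
move=> /[swap] /connectP[p pp ->]; case: p pp => [|x p] pp; first by rewrite eqxx.
move=> _; have [t pt <-] := height_path (last x p).
apply: leq_trans (height_path_ge (t := x :: p ++ t) _).
- by rewrite /= size_cat ltnS leq_addl.
- by rewrite -cat_cons cat_path pp pt.
Qed.

Lemma longest_path_coloring (e : rel T) :
  irreflexive e ->
  (forall u v, e u v -> connect (srel S) u v || connect (srel S) v u) ->
  exists c : T -> 'I_m, proper_coloring e c.
Proof.
move=> e_irr e_oriented; exists (fun v => Ordinal (height_lt v)) => u v euv.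
have neq_uv : u != v by apply: contraTneq euv => ->; rewrite e_irr.
rewrite -val_eqE /=; case/orP: (e_oriented u v euv) => [uv | vu].
- by rewrite gtn_eqF // height_connect.
- by rewrite ltn_eqF // height_connect // eq_sym.
Qed.

End LongestPathColoring.

Section LevelSchedule.
Variables (T : finType) (e : rel T).
Implicit Types (S : {set T * T}) (Bi Bj : {set T}) (B l prev rest : seq {set T}).

Definition forward_pair B (p : T * T) : Prop :=
  exists j i, [/\ j < i < size B, p.1 \in nth set0 B j & p.2 \in nth set0 B i].

Lemma connect_srelS S S' :
  S \subset S' -> subrel (connect (srel S)) (connect (srel S')).
Proof. by move=> sub; apply: connect_sub => x y xy; apply/connect1/(subsetP sub). Qed.

Lemma subset_foldl_level_step Bi S l : S \subset foldl (level_step e Bi) S l.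
Proof.
elim: l S => [|Bj l IH] S /=; first exact: subxx.
exact: subset_trans (subsetUl _ _) (IH _).
Qed.

Lemma mem_foldl_level_step Bi S l p :
  p \in foldl (level_step e Bi) S l ->
  p \in S \/ exists2 Bj, Bj \in l & (p.1 \in Bj) && (p.2 \in Bi).
Proof.
elim: l S => [|Bj l IH] S /=; first by left.
case/IH => [|[Bj' Bj'l pB]]; last by right; exists Bj'; rewrite // inE Bj'l orbT.
rewrite inE => /orP[pS | ]; first by left.
by rewrite inE => /and4P[p1 p2 _ _]; right; exists Bj; rewrite ?inE ?eqxx ?p1.
Qed.

(* Either x and y are already connected when B_j is processed, or (x, y) is added. *)
Lemma foldl_level_step_connect Bi S l Bj x y :
  Bj \in l -> x \in Bj -> y \in Bi -> e x y ->
  connect (srel (foldl (level_step e Bi) S l)) x y.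
Proof.
elim: l S => [|Bj' l IH] S //=.
rewrite inE => /orP[/eqP <- | Bjl] xB yB exy; last exact: IH.
apply: connect_srelS (subset_foldl_level_step _ _ _) _ _ _.
have [Sxy | nSxy] := boolP (connect (srel S) x y).
  exact: connect_srelS (subsetUl _ _) _ _ Sxy.
by apply: connect1; rewrite /srel !inE /= xB yB exy nSxy orbT.
Qed.

Lemma subset_level_aux S prev rest : S \subset level_aux e S prev rest.
Proof.
elim: rest S prev => [|Bi rest IH] S prev /=; first exact: subxx.
exact: subset_trans (subset_foldl_level_step _ _ _) (IH _ _).
Qed.

Lemma mem_level_aux S prev rest p :
  p \in level_aux e S prev rest -> p \in S \/ forward_pair (prev ++ rest) p.
Proof.
elim: rest S prev => [|Bi rest IH] S prev /=; first by left.
case/IH => [|fw]; last by right; rewrite -cat_rcons.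
case/mem_foldl_level_step => [|[Bj]]; first by left.
rewrite mem_rev inE => /orP[/eqP -> | Bj_prev]; first by rewrite inE.
case/andP=> p1 p2; right; exists (index Bj prev), (size prev).
rewrite index_mem Bj_prev size_cat /= addnS ltnS leq_addr.
by rewrite !nth_cat index_mem Bj_prev nth_index // ltnn subnn.
Qed.

Lemma level_aux_connect S prev rest j i x y :
  size prev <= i -> j < i < size (prev ++ rest) ->
  x \in nth set0 (prev ++ rest) j -> y \in nth set0 (prev ++ rest) i -> e x y ->
  connect (srel (level_aux e S prev rest)) x y.
Proof.
elim: rest S prev => [|Bi rest IH] S prev /= prev_i /andP[ji].
  by rewrite cats0 ltnNge prev_i.
rewrite -cat_rcons => i_lt xj yi exy.
move: prev_i; rewrite leq_eqVlt => /orP[/eqP i_eq | prev_i]; last first.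
  by apply: IH; rewrite ?size_rcons ?ji.
apply: connect_srelS (subset_level_aux _ _ _) _ _ _.
rewrite -i_eq in ji yi; rewrite cat_rcons nth_cat ji in xj.
rewrite cat_rcons nth_cat ltnn subnn in yi.
apply: (foldl_level_step_connect _ _ xj yi exy).
by rewrite mem_rev !inE mem_nth ?orbT.
Qed.

Lemma LevelSchedule_forward B p : p \in LevelSchedule e B -> forward_pair B p.
Proof. by case/mem_level_aux; rewrite ?inE. Qed.

Lemma LevelSchedule_connect B j i x y :
  j < i < size B -> x \in nth set0 B j -> y \in nth set0 B i -> e x y ->
  connect (srel (LevelSchedule e B)) x y.
Proof. exact: (@level_aux_connect set0 [::] B j i x y (leq0n i)). Qed.

End LevelSchedule.

Section ColorClasses.
Variables (T : finType) (k : nat) (c : T -> 'I_k).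

Lemma size_color_classes : size (color_classes c) = k.
Proof. by rewrite size_map size_enum_ord. Qed.

Lemma mem_nth_color_classes j x :
  j < k -> (x \in nth set0 (color_classes c) j) = (c x == j :> nat).
Proof.
move=> j_lt; rewrite (nth_map (Ordinal j_lt)) ?size_enum_ord // inE -val_eqE.
by rewrite /= nth_enum_ord.
Qed.

Lemma LevelSchedule_color_lt (e : rel T) a b :
  srel (LevelSchedule e (color_classes c)) a b -> c a < c b.
Proof.
case/LevelSchedule_forward => j [i [/andP[ji i_lt]]] /=.
rewrite size_color_classes in i_lt.
rewrite !mem_nth_color_classes ?(ltn_trans ji) // => /eqP-> /eqP->.
exact: ji.
Qed.

Lemma LevelSchedule_color_connect (e : rel T) a b :
  e a b -> c a < c b -> connect (srel (LevelSchedule e (color_classes c))) a b.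
Proof.
move=> eab ab; apply: (@LevelSchedule_connect _ _ _ (c a) (c b)) => //.
- by rewrite ab size_color_classes /=.
- by rewrite mem_nth_color_classes.
- by rewrite mem_nth_color_classes.
Qed.

Lemma increasing_path_size S :
  (forall a b, srel S a b -> c a < c b) -> forall s, dpath S s -> size s <= k.
Proof.
move=> S_lt [|x s] //= ps.
have sorted_cs : sorted (fun a b : 'I_k => a < b) (map c (x :: s)).
  by rewrite /= path_map; exact: sub_path S_lt _ _ ps.
have uniq_cs : uniq (map c (x :: s)).
  by apply: sorted_uniq sorted_cs => [a b d|a]; [apply: ltn_trans | apply: ltnn].
have := max_card (mem (map c (x :: s))).
by rewrite card_ord (card_uniqP uniq_cs) size_map.
Qed.

End ColorClasses.

Theorem lemma5 (T : finType) (e : rel T)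
  (e_sym : symmetric e) (e_irr : irreflexive e)
  (k : nat) (hk : chromatic_number e k)
  (cmin : T -> 'I_k) (hc : proper_coloring e cmin) :
  latency_is (LevelSchedule e (color_classes cmin)) k.
Proof.
set S := LevelSchedule e (color_classes cmin).
have S_bounded : forall s, dpath S s -> size s <= k.
  exact/increasing_path_size/LevelSchedule_color_lt.
split=> //; case: (posnP k) => [-> | k_gt0]; first by exists [::].
have [/existsP[t pt] | no_k_path] := boolP [exists t : k.-tuple T, dpath S t].
  by exists t; rewrite size_tuple.
have S_shorter s : dpath S s -> size s <= k.-1.
  move=> ps; rewrite -ltnS prednK // ltn_neqAle S_bounded // andbT.
  apply: contraNneq no_k_path => /eqP size_s.
  by apply/existsP; exists (Tuple size_s).
exfalso; apply: (hk.2 k.-1); first by rewrite prednK.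
apply: (longest_path_coloring S_shorter e_irr) => u v euv.
have := hc u v euv; rewrite -val_eqE neq_ltn => /orP[uv | vu].
- by rewrite LevelSchedule_color_connect.
- by rewrite (LevelSchedule_color_connect _ vu) ?orbT // e_sym.
Qed.
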